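(* Let $A=\{a_1,a_2,a_3,a_4\}$ (discrete) and give $\vec X$ the structure $\iota(a_1)=(0)_1$, $\iota(a_2)=(0)_2$, $\iota(a_3)=(1)_1$, $\iota(a_4)=(1)_2$. Then for every map $\iota_{\vec I}\colon A\to\vec I$ (the four image points not necessarily distinct), $(\vec X,\iota)$ is not dihomotopy equivalent to $(\vec I,\iota_{\vec I})$ in $A$-Posp.
   Context: A pospace is a topological space $U$ with a partial order that is a closed subset of $U\times U$; a dimap is a continuous order-preserving map; products carry the componentwise order. $\vec I=[0,1]$ with its usual order. $\vec X$ is the quotient of two copies $\vec I_1,\vec I_2$ of $\vec I$ obtained by identifying $(1/2)_1$ with $(1/2)_2$, ordered by: $(s)_i\le(t)_j$ iff either $i=j$ and $s\le t$, or $s\le1/2\le t$. Fix a pospace $A$. The category $A$-Posp has objects dimaps $\iota_B\colon A\to B$ and morphisms dimaps $f\colon B\to C$ with $f\circ\iota_B=\iota_C$. For morphisms $f,g\colon B\to C$ in $A$-Posp, a dihomotopy from $f$ to $g$ is a dimap $\phi\colon B\times\vec I\to C$ with $\phi(\cdot,0)=f$, $\phi(\cdot,1)=g$ and $\phi(\iota_B(a),t)=\iota_C(a)$ for all $a\in A$, $t$. Write $f\simeq g$ if there is a finite zigzag of such dihomotopies. A morphism $f\colon B\to C$ in $A$-Posp is a dihomotopy equivalence if there is a morphism $g\colon C\to B$ in $A$-Posp with $g\circ f\simeq\mathrm{Id}_B$ and $f\circ g\simeq\mathrm{Id}_C$. *)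

From Stdlib Require Import Relations.
From HB Require Import structures.
From mathcomp Require Import all_boot all_order all_algebra.
From mathcomp Require Import all_classical all_reals all_analysis.
From mathcomp Require Import generic_quotient subtype_topology.
Set Implicit Arguments. Unset Strict Implicit. Unset Printing Implicit Defensive.
Import Order.TTheory GRing.Theory Num.Theory.
Import numFieldTopology.Exports.
Local Open Scope classical_set_scope.
Local Open Scope ring_scope.
Local Open Scope quotient_scope.

Definition dimap {T U : topologicalType} (leT : T -> T -> Prop)
  (leU : U -> U -> Prop) (f : T -> U) : Prop :=
  continuous f /\ (forall x y, leT x y -> leU (f x) (f y)).

Definition leProd {T U : Type} (leT : T -> T -> Prop) (leU : U -> U -> Prop)
  (p q : T * U) : Prop := leT p.1 q.1 /\ leU p.2 q.2.

Definition Idir (R : realType) := set_type (`[0, 1]%classic : set R).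

Definition leI (R : realType) (s t : Idir R) : Prop := (val s <= val t).

Lemma I0_mem (R : realType) : (0 : R) \in (`[0, 1]%classic : set R).
Proof. by apply: mem_set; rewrite /= in_itv /= lexx ler01. Qed.
Lemma I1_mem (R : realType) : (1 : R) \in (`[0, 1]%classic : set R).
Proof. by apply: mem_set; rewrite /= in_itv /= lexx ler01. Qed.
Lemma Ihalf_mem (R : realType) : (2^-1 : R) \in (`[0, 1]%classic : set R).
Proof.
apply: mem_set; rewrite /= in_itv /= invr_ge0 ler0n /= invf_le1 //.
by rewrite ler1n.
Qed.

Definition I0 (R : realType) : Idir R := exist _ 0 (I0_mem R).
Definition I1 (R : realType) : Idir R := exist _ 1 (I1_mem R).

(** Morphisms of A-Posp between objects iB : A -> B and iC : A -> C. *)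
Definition is_morph {A : Type} {B C : topologicalType}
  (leB : B -> B -> Prop) (leC : C -> C -> Prop)
  (iB : A -> B) (iC : A -> C) (f : B -> C) : Prop :=
  dimap leB leC f /\ (forall a, f (iB a) = iC a).

Definition dihomotopy (R : realType) {A : Type} {B C : topologicalType}
  (leB : B -> B -> Prop) (leC : C -> C -> Prop)
  (iB : A -> B) (iC : A -> C) (f g : B -> C) : Prop :=
  is_morph leB leC iB iC f /\ is_morph leB leC iB iC g /\
  exists phi : (B * Idir R)%type -> C,
    [/\ dimap (leProd leB (@leI R)) leC phi,
        (forall b, phi (b, I0 R) = f b),
        (forall b, phi (b, I1 R) = g b) &
        (forall a t, phi (iB a, t) = iC a)].

Definition dihomotopic (R : realType) {A : Type} {B C : topologicalType}
  (leB : B -> B -> Prop) (leC : C -> C -> Prop)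
  (iB : A -> B) (iC : A -> C) : (B -> C) -> (B -> C) -> Prop :=
  clos_refl_sym_trans (B -> C) (dihomotopy R leB leC iB iC).

Definition dihomotopy_equivalent (R : realType) {A : Type} {B C : topologicalType}
  (leB : B -> B -> Prop) (leC : C -> C -> Prop)
  (iB : A -> B) (iC : A -> C) : Prop :=
  exists (f : B -> C) (g : C -> B),
    [/\ is_morph leB leC iB iC f, is_morph leC leB iC iB g,
        dihomotopic R leB leB iB iB (g \o f) id &
        dihomotopic R leC leC iC iC (f \o g) id].

(** * The pospace \vec X: two copies of \vec I (copy 1 = false, copy 2 = true)
    glued at 1/2, with the quotient topology. *)
Definition glue (R : realType) (p q : bool * Idir R) : bool :=
  (p == q) || ((val p.2 == 2^-1) && (val q.2 == 2^-1)).

Lemma glue_refl (R : realType) : reflexive (@glue R).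
Proof. by move=> p; rewrite /glue eqxx. Qed.
Lemma glue_sym (R : realType) : symmetric (@glue R).
Proof. by move=> p q; rewrite /glue eq_sym andbC. Qed.
Lemma glue_trans (R : realType) : transitive (@glue R).
Proof.
move=> q p r; rewrite /glue => /orP[/eqP->//|/andP[hp hq]] /orP[/eqP<-|/andP[_ hr]].
  by rewrite hp hq orbT.
by rewrite hp hr orbT.
Qed.

Canonical glue_equiv (R : realType) :=
  EquivRel (@glue R) (@glue_refl R) (@glue_sym R) (@glue_trans R).

Definition Xdir (R : realType) := quotient_topology {eq_quot (glue_equiv R)}.

Definition leXrep (R : realType) (p q : bool * Idir R) : Prop :=
  (p.1 = q.1 /\ val p.2 <= val q.2) \/ (val p.2 <= 2^-1 <= val q.2).

(** Induced order on \vec X (leXrep is compatible with the gluing). *)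
Definition leX (R : realType) (x y : Xdir R) : Prop :=
  exists p q : bool * Idir R,
    [/\ \pi_(Xdir R) p = x, \pi_(Xdir R) q = y & leXrep p q].

Inductive A4 : Type := a1 | a2 | a3 | a4.

Definition iX (R : realType) (a : A4) : Xdir R :=
  match a with
  | a1 => \pi_(Xdir R) (false, I0 R)
  | a2 => \pi_(Xdir R) (true, I0 R)
  | a3 => \pi_(Xdir R) (false, I1 R)
  | a4 => \pi_(Xdir R) (true, I1 R)
  end.

From HB Require Import structures.
From mathcomp Require Import all_boot all_order all_algebra.
From mathcomp Require Import all_classical all_reals all_analysis.
From mathcomp Require Import generic_quotient subtype_topology.
Import numFieldTopology.Exports.
Import Order.TTheory GRing.Theory Num.Theory.
Local Open Scope ring_scope.
Local Open Scope quotient_scope.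

(* There is not even a morphism (Idir, iI) -> (Xdir, iX): Idir is totally
   ordered, so a morphism would send iI a1, iI a2 to comparable points, whereas
   iX a1 = (0)_1 and iX a2 = (0)_2 are incomparable in Xdir. *)

Lemma is_morph_total_comparable {A : Type} {B C : topologicalType}
    {leB : B -> B -> Prop} {leC : C -> C -> Prop} {iB : A -> B} {iC : A -> C}
    {f : B -> C} :
  (forall x y, leB x y \/ leB y x) -> is_morph leB leC iB iC f ->
  forall a a', leC (iC a) (iC a') \/ leC (iC a') (iC a).
Proof.
move=> leB_total [[_ f_mono] f_i] a a'.
by case: (leB_total (iB a) (iB a')) => /f_mono; rewrite !f_i; [left|right].
Qed.

Lemma leI_total (R : realType) (s t : Idir R) : leI s t \/ leI t s.
Proof. by rewrite /leI; case: (leP (val s) (val t)) => [|/ltW]; [left|right]. Qed.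

(* Only 1/2 is glued, so the class of an endpoint (0)_b is a singleton. *)
Lemma Xdir_zero_rep (R : realType) (b : bool) (p : bool * Idir R) :
  \pi_(Xdir R) p = \pi_(Xdir R) (b, I0 R) -> p = (b, I0 R).
Proof.
move=> /eqquotP; rewrite /= /glue => /orP[/eqP //|/andP[_ /eqP half_eq0]].
have : (0 : R) < 2^-1 by rewrite invr_gt0 ltr0n.
by rewrite -half_eq0 /= ltxx.
Qed.

Lemma leX_zero_incomparable (R : realType) (b : bool) :
  ~ leX (\pi_(Xdir R) (b, I0 R)) (\pi_(Xdir R) (~~ b, I0 R)).
Proof.
move=> [p [q [/Xdir_zero_rep -> /Xdir_zero_rep -> [[/= b_eq _]|/= /andP[_ half_le0]]]]].
  by case: b b_eq.
have : (0 : R) < 2^-1 by rewrite invr_gt0 ltr0n.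
by rewrite ltNge half_le0.
Qed.

Theorem mainTheorem8 (R : realType) (iI : A4 -> Idir R) :
  ~ dihomotopy_equivalent R (@leX R) (@leI R) (@iX R) iI.
Proof.
move=> [_ [g [_ g_morph _ _]]].
have [] := is_morph_total_comparable (@leI_total R) g_morph a1 a2.
- exact: (@leX_zero_incomparable R false).
- exact: (@leX_zero_incomparable R true).
Qed.
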